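(* Let $n\ge3$, let $K$ be a binary dihedral group of order $8d$ with $d\ge2$, and let $H=[K,K]$ (cyclic of order $2d$, with $K/H\cong C_2\times C_2$). Let $\lambda=(\lambda_1,\dots,\lambda_k)$ be a partition of $n$ and $\alpha,\beta\in K$. Then $P_\lambda^\alpha$ and $P_\lambda^\beta$ are conjugate in $G_n(K,H)$ if and only if $\alpha\beta^{-1}\in H$ or $\gcd(\lambda_1,\dots,\lambda_k)$ is odd.
   Context: $\mathbb{H}$: quaternions. $A_n(K,H)$: diagonal matrices $\mathrm{diag}(k_1,\dots,k_n)$, $k_i\in K$, $k_1\cdots k_n\in H$; $G_n(K,H)$: group generated by $A_n(K,H)$ and the permutation matrices $M(\sigma)$, acting on $\mathbb{H}^n$ by left multiplication. For a partition $\lambda=(\lambda_1,\dots,\lambda_k)$ of $n$ with partial sums $m_i=\lambda_1+\dots+\lambda_i$, $m_0=0$, let $I_i=\{m_{i-1}+1,\dots,m_i\}$; for $\alpha\in K$ let $D_\alpha=\mathrm{diag}(\alpha,1,\dots,1)$. Then $P_\lambda^\alpha=P_1\times\dots\times P_k$ with $P_i=\{D_\alpha M(\sigma)D_\alpha^{-1}:\sigma\in\mathrm{Sym}(I_i)\}$. *)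

From mathcomp Require Import all_boot all_order all_algebra all_fingroup.
From mathcomp Require Import reals.
Set Implicit Arguments. Unset Strict Implicit. Unset Printing Implicit Defensive.
Import Order.TTheory GRing.Theory Num.Theory.
Local Open Scope ring_scope.

Section Quat.
Variable R : realType.

(** Real quaternions a + b i + c j + d k, stored as ((a, b), c), d.
    The additive structure is the canonical one on products. *)
Definition quat := (R * R * R * R)%type.

Definition mkq (a b c d : R) : quat := (a, b, c, d).

Definition qmul (x y : quat) : quat :=
  let: (a1, b1, c1, d1) := x in
  let: (a2, b2, c2, d2) := y in
  mkq (a1 * a2 - b1 * b2 - c1 * c2 - d1 * d2)
      (a1 * b2 + b1 * a2 + c1 * d2 - d1 * c2)
      (a1 * c2 - b1 * d2 + c1 * a2 + d1 * b2)
      (a1 * d2 + b1 * c2 - c1 * b2 + d1 * a2).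

Definition qone : quat := mkq 1 0 0 0.
Definition qi : quat := mkq 0 1 0 0.
Definition qj : quat := mkq 0 0 1 0.

Definition qinv (x : quat) : quat :=
  let: (a, b, c, d) := x in
  let N := a ^+ 2 + b ^+ 2 + c ^+ 2 + d ^+ 2 in
  mkq (a / N) (- b / N) (- c / N) (- d / N).

Fixpoint qpow (x : quat) (k : nat) : quat :=
  if k is k'.+1 then qmul x (qpow x k') else qone.

Definition is_complex (x : quat) : Prop :=
  let: (_, _, c, d) := x in c = 0 /\ d = 0.

Definition has_order (x : quat) (m : nat) : Prop :=
  (0 < m)%N /\ qpow x m = qone /\ forall k, (0 < k < m)%N -> qpow x k <> qone.

(** The binary dihedral group <zeta, j> (of order 8d when zeta is a complex
    number of multiplicative order 4d). *)
Definition BinDih (zeta : quat) (x : quat) : Prop :=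
  exists k e : nat, x = qmul (qpow zeta k) (qpow qj e).

(** The set of commutators is closed under
    inverses and K is finite, so the submonoid generated is the subgroup. *)
Definition qcomm (x y : quat) : quat := qmul (qmul x y) (qmul (qinv x) (qinv y)).

Inductive commutator_subgroup (K : quat -> Prop) : quat -> Prop :=
| CS1 : commutator_subgroup K qone
| CSstep x y h : K x -> K y -> commutator_subgroup K h ->
                 commutator_subgroup K (qmul (qcomm x y) h).

Definition qmx_mul n (A B : 'M[quat]_n) : 'M[quat]_n :=
  \matrix_(i, j) \sum_(l < n) qmul (A i l) (B l j).

Definition qdiag n (k : 'I_n -> quat) : 'M[quat]_n :=
  \matrix_(i, j) if i == j then k i else 0.

Definition qmx1 n : 'M[quat]_n := qdiag (fun _ => qone).

Definition qperm_mx n (s : 'S_n) : 'M[quat]_n :=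
  \matrix_(i, j) if s i == j then qone else 0.

Definition qprod n (k : 'I_n -> quat) : quat :=
  foldr qmul qone [seq k i | i <- enum 'I_n].

Definition A_set n (K H : quat -> Prop) (M : 'M[quat]_n) : Prop :=
  exists k : 'I_n -> quat, (forall i, K (k i)) /\ H (qprod k) /\ M = qdiag k.

Definition G_gen n (K H : quat -> Prop) (M : 'M[quat]_n) : Prop :=
  A_set K H M \/ exists s : 'S_n, M = qperm_mx s.

(** G_n(K,H): the group generated by A_n(K,H) and the permutation matrices.
    The generating set is closed under inverses and the group is finite, so
    the generated submonoid is the generated group. *)
Inductive G_n n (K H : quat -> Prop) : 'M[quat]_n -> Prop :=
| Gn1 : G_n K H (qmx1 n)
| Gnstep s g : G_gen K H s -> G_n K H g -> G_n K H (qmx_mul s g).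

Definition is_partition (n : nat) (lam : seq nat) : bool :=
  [&& sorted geq lam, all (fun p => 0 < p)%N lam & sumn lam == n].

(** block I_i (0-indexed: i < size lam, entries m_{i} <= j < m_{i+1}) *)
Definition block n (lam : seq nat) (i : nat) : {set 'I_n} :=
  [set j : 'I_n | (sumn (take i lam) <= j < sumn (take i.+1 lam))%N].

Definition young_perm n (lam : seq nat) (s : 'S_n) : Prop :=
  exists f : 'I_(size lam) -> 'S_n,
    (forall i : 'I_(size lam), perm_on (block n lam i) (f i)) /\ s = (\prod_(i < size lam) f i)%g.

Definition D_alpha n (alpha : quat) : 'M[quat]_n :=
  qdiag (fun i : 'I_n => if val i == 0%N then alpha else qone).

Definition P_set n (lam : seq nat) (alpha : quat) (M : 'M[quat]_n) : Prop :=
  exists s : 'S_n, young_perm lam s /\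
    M = qmx_mul (qmx_mul (D_alpha n alpha) (qperm_mx s)) (D_alpha n (qinv alpha)).

Definition conjugate_in n (G P Q : 'M[quat]_n -> Prop) : Prop :=
  exists g h, G g /\ G h /\ qmx_mul g h = qmx1 n /\ qmx_mul h g = qmx1 n /\
    (forall x, P x -> Q (qmx_mul (qmx_mul g x) h)) /\
    (forall y, Q y -> exists x, P x /\ y = qmx_mul (qmx_mul g x) h).

End Quat.

Definition gcd_seq (lam : seq nat) : nat := foldr gcdn 0%N lam.
Arguments P_set {R} n lam alpha M.

(* Every element of G_n(K,H) is a monomial matrix with entries in K whose
   product lies in H.  Writing the elements of K as zeta^a j^e, the parities of
   a and of e are two characters K -> Z/2 with common kernel H = [K,K], so the
   condition on a monomial matrix is that every such character sums to zero
   over its entries.  If g = (p, k) conjugates P_lambda^alpha onto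
   P_lambda^beta, then comparing the images of a transposition inside a block
   shows that, for every character chi, the function
   x |-> chi(k (p^-1 x)) + chi(D_alpha x) + chi(D_beta (p^-1 x))
   is constant on blocks; when all parts are even its total sum, which is
   chi(alpha) + chi(beta), vanishes, hence alpha beta^-1 is in H.  Conversely
   D_beta W D_alpha^-1 conjugates P_lambda^alpha onto P_lambda^beta whenever
   the diagonal W is constant on blocks, and it lies in G_n(K,H) for W = 1 if
   alpha beta^-1 is in H, or W = alpha beta^-1 on an odd block and 1
   elsewhere. *)

From mathcomp Require Import all_boot all_order all_algebra all_fingroup.
From mathcomp Require Import reals ring lra.
Set Implicit Arguments. Unset Strict Implicit. Unset Printing Implicit Defensive.
Import Order.TTheory GRing.Theory Num.Theory.
Local Open Scope ring_scope.

Arguments qmul : simpl never.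
Arguments qinv : simpl never.

Section QuatAlgebra.
Variable R : realType.
Implicit Types x y z w : quat R.

Local Notation one := (qone R).
Local Notation j := (qj R).

Lemma qmulA x y z : qmul x (qmul y z) = qmul (qmul x y) z.
Proof.
case: x => [[[a b] c] d]; case: y => [[[a' b'] c'] d']; case: z => [[[p q] r] s].
by rewrite /qmul /mkq; congr (_, _, _, _); ring.
Qed.

Lemma qmul1q x : qmul one x = x.
Proof. by case: x => [[[a b] c] d]; rewrite /qmul /mkq; congr (_, _, _, _); ring. Qed.

Lemma qmulq1 x : qmul x one = x.
Proof. by case: x => [[[a b] c] d]; rewrite /qmul /mkq; congr (_, _, _, _); ring. Qed.

Lemma qmul0q x : qmul 0 x = 0.
Proof. by case: x => [[[a b] c] d]; rewrite /qmul /mkq; congr (_, _, _, _); ring. Qed.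

Lemma qmulq0 x : qmul x 0 = 0.
Proof. by case: x => [[[a b] c] d]; rewrite /qmul /mkq; congr (_, _, _, _); ring. Qed.

Definition qnorm2 x : R := let: (a, b, c, d) := x in a ^+ 2 + b ^+ 2 + c ^+ 2 + d ^+ 2.
Arguments qnorm2 : simpl never.

Lemma qnorm2M x y : qnorm2 (qmul x y) = qnorm2 x * qnorm2 y.
Proof.
by case: x => [[[a b] c] d]; case: y => [[[a' b'] c'] d']; rewrite /qmul /mkq /qnorm2; ring.
Qed.

Lemma qnorm2_ge0 x : 0 <= qnorm2 x.
Proof. by case: x => [[[a b] c] d]; rewrite /qnorm2 !addr_ge0 ?sqr_ge0. Qed.

Lemma qnorm2_0 : qnorm2 0 = 0.
Proof. by rewrite /qnorm2 /= expr0n /=; ring. Qed.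

Lemma qnorm2_1 : qnorm2 one = 1.
Proof. by rewrite /qnorm2 /= expr0n /= expr1n; ring. Qed.

Lemma qnorm2_j : qnorm2 j = 1.
Proof. by rewrite /qnorm2 /= expr0n /= expr1n; ring. Qed.

Lemma qmulqV x : qnorm2 x != 0 -> qmul x (qinv x) = one.
Proof.
case: x => [[[a b] c] d]; rewrite /qnorm2 => ?.
by rewrite /qmul /qinv /mkq; congr (_, _, _, _); field.
Qed.

Lemma qmulVq x : qnorm2 x != 0 -> qmul (qinv x) x = one.
Proof.
case: x => [[[a b] c] d]; rewrite /qnorm2 => ?.
by rewrite /qmul /qinv /mkq; congr (_, _, _, _); field.
Qed.

Lemma qmulK x y : qnorm2 x != 0 -> qmul (qmul y x) (qinv x) = y.
Proof. by move=> x0; rewrite -qmulA qmulqV // qmulq1. Qed.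

Lemma qmulVK x y : qnorm2 x != 0 -> qmul (qmul y (qinv x)) x = y.
Proof. by move=> x0; rewrite -qmulA qmulVq // qmulq1. Qed.

Lemma qinv_unique x y : qnorm2 y != 0 -> qmul x y = one -> x = qinv y.
Proof. by move=> y0 xy1; rewrite -[x](qmulK _ y0) xy1 qmul1q. Qed.

Lemma qinv1 : qinv one = one.
Proof. by symmetry; apply: qinv_unique; rewrite ?qnorm2_1 ?oner_neq0 ?qmulq1. Qed.

Lemma qmulI x y z : qnorm2 x != 0 -> qmul x y = qmul x z -> y = z.
Proof. by move=> x0 E; rewrite -[y]qmul1q -[z]qmul1q -(qmulVq x0) -!qmulA E. Qed.

Lemma qmulIq x y z : qnorm2 x != 0 -> qmul y x = qmul z x -> y = z.
Proof. by move=> x0 E; rewrite -[y](qmulK _ x0) E qmulK. Qed.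

Lemma qpowD x a b : qpow x (a + b) = qmul (qpow x a) (qpow x b).
Proof. by elim: a => [|a IH] /=; rewrite ?qmul1q // IH qmulA. Qed.

Lemma qpowM x a b : qpow x (a * b) = qpow (qpow x a) b.
Proof. by elim: b => [|b IH] /=; rewrite ?muln0 // mulnS qpowD IH. Qed.

Lemma qpowSr x a : qpow x a.+1 = qmul (qpow x a) x.
Proof. by rewrite -addn1 qpowD /= qmulq1. Qed.

Lemma qpow1n a : qpow one a = one.
Proof. by elim: a => //= a ->; rewrite qmul1q. Qed.

Lemma qnorm2X x a : qnorm2 (qpow x a) = qnorm2 x ^+ a.
Proof. by elim: a => [|a IH] /=; rewrite ?qnorm2_1 ?expr0 // qnorm2M IH exprS. Qed.

Lemma qj4 : qpow j 4 = one.
Proof. by rewrite /= /qmul /mkq; congr (_, _, _, _); ring. Qed.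

Lemma complexM x y : is_complex x -> is_complex y -> is_complex (qmul x y).
Proof.
case: x => [[[a b] c] d]; case: y => [[[a' b'] c'] d'] /= [-> ->] [-> ->].
by split; ring.
Qed.

Lemma complexX x a : is_complex x -> is_complex (qpow x a).
Proof. by move=> cx; elim: a => [|a IH] /=; [split | exact: complexM]. Qed.

Lemma complex_sqr1 w : is_complex w -> qmul w w = one ->
  w = one \/ w = mkq (-1) 0 0 0.
Proof.
case: w => [[[a b] c] d] /= [-> ->]; rewrite /qmul /mkq => -[ab1 ab0 _ _].
have b0 : b = 0.
  apply/eqP; apply: contraT => b_neq0.
  have : a * b = 0 by lra.
  by move/eqP; rewrite mulf_eq0 (negbTE b_neq0) orbF => /eqP a0; move: ab1; rewrite a0; nra.
have : (a - 1) * (a + 1) = 0 by rewrite b0 in ab1; nra.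
move/eqP; rewrite mulf_eq0 => /orP[|] /eqP a_pm1; [left | right];
  by rewrite /qone /mkq b0; congr (_, _, _, _); lra.
Qed.

Lemma qj2 : qpow j 2 = mkq (-1) 0 0 0.
Proof. by rewrite /= /qmul /mkq; congr (_, _, _, _); ring. Qed.

Lemma complex_mulj_eq0 x y : is_complex x -> is_complex y -> qmul y j = x -> y = 0.
Proof.
case: x => [[[a b] c] d]; case: y => [[[p q] r] s] /= [-> ->] [-> ->].
by rewrite /qmul /mkq => -[_ _ p0 q0]; congr (_, _, _, _); lra.
Qed.

Lemma qj_conj_complex y : is_complex y -> qnorm2 y = 1 ->
  qmul j y = qmul (qinv y) j.
Proof.
case: y => [[[a b] c] d] /= [-> ->]; rewrite /qnorm2 => N1.
by rewrite /qinv N1 !divr1 /qmul /mkq; congr (_, _, _, _); ring.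
Qed.

Lemma qcomm_complex_j y : is_complex y -> qnorm2 y = 1 -> qcomm y j = qmul y y.
Proof.
case: y => [[[a b] c] d] /= [-> ->]; rewrite /qnorm2 => N1.
rewrite /qcomm /qinv N1 /qmul /mkq /=.
have -> : (0 : R) ^+ 2 + 0 ^+ 2 + 1 ^+ 2 + 0 ^+ 2 = 1 by ring.
by rewrite !divr1; congr (_, _, _, _); ring.
Qed.

End QuatAlgebra.

Section MonomialMatrices.
Variables (R : realType) (n : nat).
Local Notation one := (qone R).

Definition qmono (p : 'S_n) (a : 'I_n -> quat R) : 'M[quat R]_n :=
  \matrix_(i, j) if p i == j then a i else 0.

Lemma qmono_mul p q a b :
  qmx_mul (qmono p a) (qmono q b) = qmono (p * q)%g (fun i => qmul (a i) (b (p i))).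
Proof.
apply/matrixP => i k; rewrite /qmx_mul !mxE (bigD1 (p i)) //= big1 => [|l pil].
  by rewrite !mxE eqxx permM; case: (q (p i) == k); rewrite ?qmulq0 addr0.
by rewrite !mxE eq_sym (negbTE pil) qmul0q.
Qed.

Lemma eq_qmono p a b : a =1 b -> qmono p a = qmono p b.
Proof. by move=> eq_ab; apply/matrixP => i j; rewrite !mxE eq_ab. Qed.

Lemma qdiag_mono a : qdiag a = qmono 1%g a.
Proof. by apply/matrixP => i j; rewrite !mxE perm1. Qed.

Lemma qmx1_mono : qmx1 R n = qmono 1%g (fun _ => one).
Proof. exact: qdiag_mono. Qed.

Lemma qperm_mx_mono s : qperm_mx R s = qmono s (fun _ => one).
Proof. by apply/matrixP => i j; rewrite !mxE. Qed.

Lemma qmono_inj p q a b : (forall i, qnorm2 (a i) != 0%R) ->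
  qmono p a = qmono q b -> p = q /\ a =1 b.
Proof.
move=> a_unit E.
have Ei i : (if q i == p i then b i else 0) = a i.
  by have := congr1 (fun M : 'M_n => M i (p i)) E; rewrite !mxE eqxx.
have qp i : q i = p i.
  by apply/eqP; move: (Ei i); case: eqP => // _ a0; move: (a_unit i); rewrite -a0 qnorm2_0 eqxx.
by split=> [|i]; [apply/permP => i; rewrite qp | rewrite -Ei qp eqxx].
Qed.

Lemma qdiag_conj_mono k k' s a :
  qmx_mul (qmx_mul (qdiag k) (qmono s a)) (qdiag k') =
  qmono s (fun i => qmul (qmul (k i) (a i)) (k' (s i))).
Proof.
by rewrite !qdiag_mono !qmono_mul mul1g mulg1; apply: eq_qmono => i; rewrite perm1.
Qed.

Definition dalpha (alpha : quat R) (i : 'I_n) := if val i == 0%N then alpha else one.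

Lemma P_mx_mono alpha s :
  qmx_mul (qmx_mul (D_alpha n alpha) (qperm_mx R s)) (D_alpha n (qinv alpha)) =
  qmono s (fun i => qmul (dalpha alpha i) (qinv (dalpha alpha (s i)))).
Proof.
rewrite /D_alpha -!/(dalpha _) !qdiag_mono qperm_mx_mono !qmono_mul mul1g mulg1.
apply: eq_qmono => i; rewrite qmulq1 /dalpha.
by case: (val (s i) == 0%N); rewrite ?qinv1.
Qed.

Lemma big_addb_dalpha (ph : quat R -> bool) alpha : (0 < n)%N -> ph one = false ->
  \big[addb/false]_i ph (dalpha alpha i) = ph alpha.
Proof.
move=> n_gt0 ph1; rewrite (bigD1 (Ordinal n_gt0)) //= big1 ?addbF // => i i_neq0.
by rewrite /dalpha -val_eqE /= in i_neq0 *; rewrite (negbTE i_neq0).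
Qed.

End MonomialMatrices.

Section Partitions.
Local Close Scope ring_scope.

Lemma odd_gcd_seq lam : odd (gcd_seq lam) = has odd lam.
Proof.
apply/negb_inj; rewrite -dvdn2 -all_predC.
by elim: lam => //= p lam IH; rewrite dvdn_gcd IH dvdn2.
Qed.

Lemma big_addb_const (T : finType) (B : {pred T}) c :
  \big[addb/false]_(i in B) c = c && odd #|B|.
Proof.
rewrite big_const; elim: #|B| => [|k IH] /=; first by rewrite andbF.
by rewrite IH; case: (odd k); rewrite ?andbT ?andbF ?addbF ?addbb.
Qed.

Lemma big_addb_perm n (s : 'S_n) (F : 'I_n -> bool) :
  \big[addb/false]_i F i = \big[addb/false]_i F (s i).
Proof. exact: (reindex_inj (@perm_inj _ s)). Qed.

Lemma leq_sumn_take m s : sumn (take m s) <= sumn s.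
Proof. by rewrite -{2}(cat_take_drop m s) sumn_cat leq_addr. Qed.

Lemma leq_sumn_take2 m m' s : m <= m' -> sumn (take m s) <= sumn (take m' s).
Proof. by move=> le_mm'; rewrite -(take_takel s le_mm') leq_sumn_take. Qed.

Lemma card_ord_interval n s t : s <= t <= n -> #|[set j : 'I_n | s <= j < t]| = t - s.
Proof.
case/andP=> le_st le_tn.
rewrite -sum1dep_card -(big_mkord (fun j => s <= j < t) (fun=> 1)).
rewrite -(@big_nat_widen _ _ _ 0 t n (fun j => s <= j)) // (big_cat_nat (leq0n s) le_st) /=.
rewrite big_nat_cond big1 ?add0n => [|i /andP[/andP[_ lt_is] le_si]]; last first.
  by rewrite leqNgt lt_is in le_si.
rewrite big_nat_cond (eq_bigl (fun i => (s <= i < t) && true)) => [|i].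
  by rewrite -big_nat_cond sum_nat_const_nat muln1.
by rewrite andbT andbAC andbb.
Qed.

Variables (n : nat) (lam : seq nat).
Local Notation block := (block n lam).

Lemma block_uniq (x : 'I_n) b c : x \in block b -> x \in block c -> b = c.
Proof.
wlog le_bc : b c / b <= c => [W xb xc|].
  by case/orP: (leq_total b c) => /W; [apply | move=> W'; symmetry; apply: W'].
rewrite !inE => /andP[_ xb] /andP[cx _]; apply/eqP; rewrite eqn_leq le_bc leqNgt.
apply/negP => lt_bc; have := leq_ltn_trans cx xb.
by rewrite ltnNge leq_sumn_take2.
Qed.

Lemma block_size (x : 'I_n) b : x \in block b -> b < size lam.
Proof.
rewrite inE; case: (ltnP b (size lam)) => // le_sb.
rewrite !take_oversize ?(leq_trans le_sb) // => /andP[le lt].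
by move: (leq_ltn_trans le lt); rewrite ltnn.
Qed.

Lemma tperm_young b (x y : 'I_n) :
  x \in block b -> y \in block b -> young_perm lam (tperm x y).
Proof.
move=> xb yb; have lt_b := block_size xb.
exists (fun i => if val i == b then tperm x y else 1%g); split=> [i|].
  case: eqP => [->|_]; last exact: perm_on1.
  by apply: subset_trans (tperm_on x y) _; apply/subsetP => z; rewrite in_set2 => /orP[]/eqP->.
by rewrite -big_mkcond /= (big_pred1 (Ordinal lt_b)) // => i; rewrite /= -val_eqE.
Qed.

Lemma young_perm_block s b (x : 'I_n) :
  young_perm lam s -> (s x \in block b) = (x \in block b).
Proof.
move=> [f [f_on ->]]; move: x.
apply: (big_ind (fun s : 'S_n => forall x, (s x \in block b) = (x \in block b))).
- by move=> x; rewrite perm1.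
- by move=> u v IHu IHv x; rewrite permM IHv IHu.
move=> i _ x; have [<-|neq_ib] := eqVneq (nat_of_ord i) b; first exact: perm_closed.
have notb y : y \in block i -> (y \in block b) = false.
  by move=> yi; apply: contraNF neq_ib => /(block_uniq yi) ->.
case xi: (x \in block i); last by rewrite (out_perm (f_on i)) ?xi.
by rewrite !notb ?perm_closed.
Qed.

Hypothesis sum_lam : sumn lam = n.

Lemma card_block b : b < size lam -> #|block b| = nth 0 lam b.
Proof.
move=> lt_b.
have take_bS : sumn (take b.+1 lam) = sumn (take b lam) + nth 0 lam b.
  by rewrite (take_nth 0 lt_b) sumn_rcons.
rewrite card_ord_interval; first by rewrite take_bS addKn.
by rewrite take_bS leq_addr -take_bS -sum_lam leq_sumn_take.
Qed.

Lemma big_addb_block_even (G : 'I_n -> bool) : ~~ has odd lam ->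
  (forall b x y, x \in block b -> y \in block b -> G x = G y) ->
  \big[addb/false]_a G a = false.
Proof.
move=> /hasPn even_lam G_block.
suff sum_take b : b <= size lam ->
    \big[addb/false]_(a : 'I_n | a < sumn (take b lam)) G a = false.
  rewrite -[RHS](sum_take (size lam)) // take_size sum_lam.
  by apply: eq_bigl => a; rewrite ltn_ord.
elim: b => [_|b IH lt_b]; first by rewrite big_pred0 // => a; rewrite take0 ltn0.
rewrite (bigID (fun a : 'I_n => a < sumn (take b lam))) /=.
rewrite (eq_bigl (fun a : 'I_n => a < sumn (take b lam))) => [|a]; last first.
  by rewrite andb_idl // => /leq_trans; apply; apply: leq_sumn_take2.
rewrite IH ?(ltnW lt_b) // (eq_bigl (mem (block b))) => [|a]; last first.
  by rewrite !inE andbC -leqNgt.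
have [x xb|block0] := pickP (mem (block b)); last by rewrite big_pred0.
rewrite (eq_bigr (fun=> G x)) => [|y yb]; last exact: G_block yb xb.
by rewrite big_addb_const card_block // (negbTE (even_lam _ (mem_nth 0 lt_b))) andbF.
Qed.

End Partitions.

Definition parity_hom (R : realType) (K : quat R -> Prop) (ph : quat R -> bool) :=
  forall x y, K x -> K y -> ph (qmul x y) = ph x (+) ph y.

Section BinaryDihedral.
Local Close Scope ring_scope.
Variables (R : realType) (d : nat) (zeta : quat R).
Hypotheses (d_gt0 : 0 < d) (zeta_complex : is_complex zeta)
  (zeta_order : has_order zeta (4 * d)).
Implicit Types x y : quat R.

Local Notation one := (qone R).
Local Notation j := (qj R).
Local Notation K := (BinDih zeta).
Local Notation H := (commutator_subgroup (BinDih zeta)).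

Lemma zeta_pow_order : qpow zeta (4 * d) = one.
Proof. by case: zeta_order => _ []. Qed.

Lemma qnorm2_zeta : qnorm2 zeta = 1%R.
Proof.
have := qnorm2X zeta (4 * d); rewrite zeta_pow_order qnorm2_1 => /esym/eqP.
by rewrite pexpr_eq1 ?qnorm2_ge0 ?muln_gt0 // => /eqP.
Qed.

Lemma qnorm2_zeta_pow a : qnorm2 (qpow zeta a) = 1%R.
Proof. by rewrite qnorm2X qnorm2_zeta expr1n. Qed.

Lemma qnorm2_j_pow e : qnorm2 (qpow j e) = 1%R.
Proof. by rewrite qnorm2X qnorm2_j expr1n. Qed.

Lemma zeta_pow_mod a : qpow zeta a = qpow zeta (a %% (4 * d)).
Proof.
by rewrite {1}(divn_eq a (4 * d)) qpowD mulnC qpowM zeta_pow_order qpow1n qmul1q.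
Qed.

Lemma zeta_pow_eq1 k : qpow zeta k = one -> 4 * d %| k.
Proof.
move=> zk1; apply: contraT; rewrite -lt0n => r_gt0; exfalso.
case: zeta_order => _ [_ min]; apply: (min (k %% (4 * d))).
  by rewrite r_gt0 ltn_mod muln_gt0.
by rewrite -zeta_pow_mod.
Qed.

Lemma zeta_pow_odd a b : qpow zeta a = qpow zeta b -> odd a = odd b.
Proof.
wlog le_ab : a b / a <= b => [W|E].
  by case/orP: (leq_total a b) => /W W' E; [|symmetry]; apply: W'.
have even_ba : ~~ odd (b - a).
  rewrite -dvdn2; apply: dvdn_trans (dvdn_mulr d (isT : 2 %| 4)) (zeta_pow_eq1 _).
  apply: (@qmulI _ (qpow zeta a)); first by rewrite qnorm2_zeta_pow oner_neq0.
  by rewrite -qpowD subnKC // qmulq1 E.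
by rewrite -(subnKC le_ab) oddD (negbTE even_ba) addbF.
Qed.

Lemma qj_pow_zeta_pow e b : exists2 c, odd c = odd b &
  qmul (qpow j e) (qpow zeta b) = qmul (qpow zeta c) (qpow j e).
Proof.
have qj_zeta : qmul j zeta = qmul (qpow zeta (4 * d).-1) j.
  rewrite qj_conj_complex ?qnorm2_zeta //; congr qmul; symmetry; apply: qinv_unique.
    by rewrite qnorm2_zeta oner_neq0.
  by rewrite -qpowSr prednK ?muln_gt0 // zeta_pow_order.
have odd_4d1 : odd (4 * d).-1 by rewrite -subn1 oddB ?muln_gt0 // oddM.
have qj_zeta_pow k : qmul j (qpow zeta k) = qmul (qpow zeta ((4 * d).-1 * k)) j.
  elim: k => [|k IH] /=; first by rewrite muln0 /= qmulq1 qmul1q.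
  by rewrite qmulA qj_zeta -qmulA IH qmulA -qpowD mulnS.
elim: e b => [|e IH] b; first by exists b => //=; rewrite qmulq1 qmul1q.
have [c odd_c E] := IH b.
exists ((4 * d).-1 * c); first by rewrite oddM odd_4d1 odd_c.
by rewrite [qpow j e.+1]/= -qmulA E qmulA qj_zeta_pow -!qmulA.
Qed.

Definition zj a e := qmul (qpow zeta a) (qpow j e).

Lemma zjM a e b f : exists2 c, odd c = odd a (+) odd b &
  qmul (zj a e) (zj b f) = zj c (e + f).
Proof.
have [c odd_c E] := qj_pow_zeta_pow e b.
exists (a + c); first by rewrite oddD odd_c.
by rewrite /zj -qmulA (qmulA (qpow j e)) E -qmulA qmulA -!qpowD.
Qed.

Lemma qj2_zeta : qpow j 2 = qpow zeta (2 * d).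
Proof.
have sq1 : qmul (qpow zeta (2 * d)) (qpow zeta (2 * d)) = one.
  by rewrite -qpowD addnn -mul2n mulnA zeta_pow_order.
have neq1 : qpow zeta (2 * d) <> one.
  by case: zeta_order => _ [_]; apply; rewrite muln_gt0 d_gt0 ltn_pmul2r.
by rewrite qj2; case: (complex_sqr1 (complexX (2 * d) zeta_complex) sq1) => [/neq1|->].
Qed.

Lemma zj_reduce a e : exists2 a', odd a' = odd a & zj a e = zj a' (odd e).
Proof.
exists (a + 2 * d * e./2); first by rewrite oddD -mulnA oddM addbF.
rewrite /zj -{1}(odd_double_half e) addnC qpowD -muln2 mulnC qpowM qj2_zeta -qpowM.
by rewrite qpowD qmulA.
Qed.

Lemma zj_inj_odd a e b f : zj a e = zj b f -> odd a = odd b /\ odd e = odd f.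
Proof.
have [a' <- ->] := zj_reduce a e; have [b' <- ->] := zj_reduce b f.
have zeta_pow_neq0 k : qpow zeta k <> 0%R.
  by move=> z0; move: (qnorm2_zeta_pow k); rewrite z0 qnorm2_0 => /eqP; rewrite eq_sym oner_eq0.
rewrite /zj; case: (odd e); case: (odd f) => /= E.
- split=> //; apply: zeta_pow_odd; apply: (@qmulIq _ (qmul j one)) => //.
  by rewrite qnorm2M qnorm2_j qnorm2_1 mulr1 oner_neq0.
- move: E; rewrite !qmulq1 => /(complex_mulj_eq0 (complexX _ zeta_complex)).
  by move/(_ (complexX _ zeta_complex))/zeta_pow_neq0.
- move: E; rewrite !qmulq1 => /esym/(complex_mulj_eq0 (complexX _ zeta_complex)).
  by move/(_ (complexX _ zeta_complex))/zeta_pow_neq0.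
- by split=> //; apply: zeta_pow_odd; move: E; rewrite !qmulq1.
Qed.

Definition zeta_parity x := boolp.asbool (exists a e, x = zj a e /\ odd a).
Definition j_parity x := boolp.asbool (exists a e, x = zj a e /\ odd e).

Lemma zeta_parity_zj a e : zeta_parity (zj a e) = odd a.
Proof.
apply/boolp.asboolP/idP => [[a' [e' [E odd_a']]]|odd_a]; last by exists a, e.
by have [-> _] := zj_inj_odd E.
Qed.

Lemma j_parity_zj a e : j_parity (zj a e) = odd e.
Proof.
apply/boolp.asboolP/idP => [[a' [e' [E odd_e']]]|odd_e]; last by exists a, e.
by have [_ ->] := zj_inj_odd E.
Qed.

Lemma BinDih1 : K one.
Proof. by exists 0, 0; rewrite qmul1q. Qed.

Lemma BinDihM x y : K x -> K y -> K (qmul x y).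
Proof. by move=> [a [e ->]] [b [f ->]]; have [c _ E] := zjM a e b f; exists c, (e + f). Qed.

Lemma BinDihV x : K x -> K (qinv x).
Proof.
move=> [a [e ->]]; have [c _ E] := qj_pow_zeta_pow (3 * e) ((4 * d).-1 * a).
exists c, (3 * e); rewrite -E; symmetry; apply: qinv_unique.
  by rewrite qnorm2M qnorm2_zeta_pow qnorm2_j_pow mulr1 oner_neq0.
rewrite -qmulA (qmulA (qpow zeta _)) -qpowD.
have -> : (4 * d).-1 * a + a = 4 * d * a.
  by rewrite -{2}(mul1n a) -mulnDl addn1 prednK ?muln_gt0.
by rewrite (qpowM zeta) zeta_pow_order qpow1n qmul1q -qpowD addnC -mulSn qpowM qj4 qpow1n.
Qed.

Lemma BinDih_unit x : K x -> qnorm2 x != 0%R.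
Proof.
by move=> [a [e ->]]; rewrite qnorm2M qnorm2_zeta_pow qnorm2_j_pow mulr1 oner_neq0.
Qed.

Lemma zeta_parity_hom : parity_hom K zeta_parity.
Proof.
move=> _ _ [a [e ->]] [b [f ->]]; have [c odd_c E] := zjM a e b f.
by rewrite -!/(zj _ _) E !zeta_parity_zj.
Qed.

Lemma j_parity_hom : parity_hom K j_parity.
Proof.
move=> _ _ [a [e ->]] [b [f ->]]; have [c _ E] := zjM a e b f.
by rewrite -!/(zj _ _) E !j_parity_zj oddD.
Qed.

Section ParityHom.
Variable ph : quat R -> bool.
Hypothesis ph_hom : parity_hom K ph.

Lemma parity_hom1 : ph one = false.
Proof. by have := ph_hom BinDih1 BinDih1; rewrite qmul1q; case: (ph one). Qed.

Lemma parity_homV x : K x -> ph (qinv x) = ph x.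
Proof.
move=> Kx; have := ph_hom Kx (BinDihV Kx); rewrite (qmulqV (BinDih_unit Kx)) parity_hom1.
by case: (ph x); case: (ph (qinv x)).
Qed.

Lemma parity_hom_qmulV x y : K x -> K y -> ph (qmul x (qinv y)) = ph x (+) ph y.
Proof. by move=> Kx Ky; rewrite ph_hom ?parity_homV //; exact: BinDihV. Qed.

Lemma parity_homM3 x y z : K x -> K y -> K z ->
  ph (qmul (qmul x y) z) = ph x (+) ph y (+) ph z.
Proof. by move=> Kx Ky Kz; rewrite !ph_hom //; exact: BinDihM. Qed.

End ParityHom.

Lemma comm_subgroup_sub x : H x -> K x.
Proof.
elim=> [|a b h Ka Kb _ Kh]; first exact: BinDih1.
apply: BinDihM Kh; apply: BinDihM; first exact: BinDihM.
by apply: BinDihM; apply: BinDihV.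
Qed.

Lemma comm_subgroup_parity ph x : parity_hom K ph -> H x -> ph x = false.
Proof.
move=> hom; elim=> [|a b h Ka Kb Hh IH]; first exact: parity_hom1.
have Ka' := BinDihV Ka; have Kb' := BinDihV Kb.
have Kab := BinDihM Ka Kb; have Kab' := BinDihM Ka' Kb'.
rewrite /qcomm (hom _ _ (BinDihM Kab Kab') (comm_subgroup_sub Hh)) IH addbF.
rewrite (hom _ _ Kab Kab') (hom _ _ Ka Kb) (hom _ _ Ka' Kb') !parity_homV //.
by case: (ph a); case: (ph b).
Qed.

Lemma parity_ker_comm_subgroup x :
  K x -> (forall ph, parity_hom K ph -> ph x = false) -> H x.
Proof.
move=> [a [e ->]]; rewrite -/(zj a e) => ker.
have := ker _ zeta_parity_hom; have := ker _ j_parity_hom.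
rewrite zeta_parity_zj j_parity_zj => even_e even_a.
have [a' odd_a' ->] := zj_reduce a e.
rewrite even_e /zj /= qmulq1 -(odd_double_half a') odd_a' even_a add0n -addnn qpowD.
rewrite -qcomm_complex_j; [|exact: complexX|exact: qnorm2_zeta_pow].
rewrite -[qcomm _ _]qmulq1.
apply: CSstep; last exact: CS1.
  by exists a'./2, 0; rewrite /= qmulq1.
by exists 0, 1; rewrite /= qmul1q qmulq1.
Qed.

Lemma BinDih_dalpha n alpha (i : 'I_n) : K alpha -> K (dalpha alpha i).
Proof. by rewrite /dalpha; case: eqP => // _ _; exact: BinDih1. Qed.

Lemma BinDih_foldr n (k : 'I_n -> quat R) (s : seq 'I_n) :
  (forall i, K (k i)) -> K (foldr (@qmul R) one [seq k i | i <- s]).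
Proof. by move=> Kk; elim: s => [|i s IH] /=; [exact: BinDih1 | exact: BinDihM]. Qed.

Lemma parity_qprod ph n (k : 'I_n -> quat R) : parity_hom K ph -> (forall i, K (k i)) ->
  ph (qprod k) = \big[addb/false]_i ph (k i).
Proof.
move=> hom Kk; rewrite /qprod -big_enum /=.
elim: (enum 'I_n) => [|i s IH] /=; first by rewrite big_nil parity_hom1.
by rewrite big_cons hom ?IH //; exact: BinDih_foldr.
Qed.

Lemma comm_subgroup_qprod n (k : 'I_n -> quat R) : (forall i, K (k i)) ->
  H (qprod k) <-> forall ph, parity_hom K ph -> \big[addb/false]_i ph (k i) = false.
Proof.
move=> Kk; split=> [Hk ph hom|ker]; first by rewrite -parity_qprod // comm_subgroup_parity.
apply: parity_ker_comm_subgroup; first exact: BinDih_foldr.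
by move=> ph hom; rewrite parity_qprod ?ker.
Qed.

Definition parity_balanced n (k : 'I_n -> quat R) :=
  (forall i, K (k i)) /\ forall ph, parity_hom K ph -> \big[addb/false]_i ph (k i) = false.

Lemma G_n_mono n (g : 'M[quat R]_n) :
  G_n K H g -> exists p k, parity_balanced k /\ g = qmono p k.
Proof.
elim=> [|s g' gen_s _ [p [k [[Kk bal_k] ->]]]].
  exists 1%g, (fun=> one); split; last exact: qmx1_mono.
  by split=> [_|ph hom]; [exact: BinDih1 | rewrite big1 // => i _; exact: parity_hom1].
case: gen_s => [[a [Ka [Ha ->]]]|[t ->]].
  exists p, (fun i => qmul (a i) (k i)); split.
    split=> [i|ph hom]; first exact: BinDihM.
    rewrite (eq_bigr (fun i => ph (a i) (+) ph (k i))) => [|i _]; last exact: hom.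
    by rewrite big_split /= bal_k // addbF; apply: (comm_subgroup_qprod Ka).1.
  by rewrite qdiag_mono qmono_mul mul1g; apply: eq_qmono => i; rewrite perm1.
exists (t * p)%g, (fun i => k (t i)); split.
  split=> [//|ph hom].
  by rewrite -[RHS](bal_k ph hom) [RHS](big_addb_perm t).
by rewrite qperm_mx_mono qmono_mul; apply: eq_qmono => i; rewrite qmul1q.
Qed.

Lemma balanced_G_n n (k : 'I_n -> quat R) : parity_balanced k -> G_n K H (qdiag k).
Proof.
move=> [Kk bal_k]; have -> : qdiag k = qmx_mul (qdiag k) (qmx1 R n).
  by rewrite qmx1_mono qdiag_mono qmono_mul mulg1; apply: eq_qmono => i; rewrite qmulq1.
apply: Gnstep; last exact: Gn1.
by left; exists k; do 2!split=> //; apply/(comm_subgroup_qprod Kk).2.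
Qed.

Lemma balanced_dalpha_conj n a a' (v : 'I_n -> quat R) : (0 < n)%N ->
  K a -> K a' -> (forall i, K (v i)) ->
  (forall ph, parity_hom K ph -> \big[addb/false]_i ph (v i) = ph a (+) ph a') ->
  parity_balanced (fun i => qmul (qmul (dalpha a i) (v i)) (qinv (dalpha a' i))).
Proof.
move=> n_gt0 Ka Ka' Kv sum_v; split=> [i|ph hom].
  exact: BinDihM (BinDihM (BinDih_dalpha i Ka) (Kv i)) (BinDihV (BinDih_dalpha i Ka')).
rewrite (eq_bigr (fun i => ph (dalpha a i) (+) ph (v i) (+) ph (dalpha a' i))) => [|i _].
  rewrite !big_split /= !big_addb_dalpha ?parity_hom1 // sum_v //.
  by case: (ph a); case: (ph a').
have Ka_i := BinDih_dalpha i Ka; have Ka'_i := BinDih_dalpha i Ka'.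
by rewrite parity_homM3 ?parity_homV //; exact: BinDihV.
Qed.

Lemma conjugate_block_parity n lam a b p k p' k' ph :
  K a -> K b -> (forall i, K (k i)) -> (forall i, K (k' i)) -> parity_hom K ph ->
  qmx_mul (qmono p' k') (qmono p k) = qmx1 R n ->
  (forall M, P_set n lam a M ->
     P_set n lam b (qmx_mul (qmx_mul (qmono p k) M) (qmono p' k'))) ->
  forall c (x y : 'I_n), x \in block n lam c -> y \in block n lam c ->
  ph (k (p^-1 x)%g) (+) ph (dalpha a x) (+) ph (dalpha b (p^-1 x)%g) =
  ph (k (p^-1 y)%g) (+) ph (dalpha a y) (+) ph (dalpha b (p^-1 y)%g).
Proof.
move=> Ka Kb Kk Kk' hom inv_g conj_ab c x y xc yc.
move: inv_g; rewrite qmono_mul qmx1_mono => /qmono_inj[i|p'p k'k].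
  by apply: BinDih_unit; apply: BinDihM.
pose s := tperm x y.
have [t [_ Et]] := conj_ab _ (ex_intro _ s (conj (tperm_young xc yc) erefl)).
rewrite !P_mx_mono in Et.
pose fa i := qmul (dalpha a i) (qinv (dalpha a (s i))).
pose fb i := qmul (dalpha b i) (qinv (dalpha b (t i))).
have : qmx_mul (qmono t fb) (qmono p k) = qmx_mul (qmono p k) (qmono s fa).
  rewrite -Et !qmono_mul -[(p * s * p' * p)%g]mulgA p'p mulg1.
  by apply: eq_qmono => i; rewrite !permM -qmulA k'k qmulq1.
rewrite !qmono_mul => /qmono_inj[i|tp_ps fk_kf].
  apply/BinDih_unit/BinDihM => //.
  exact: BinDihM (BinDih_dalpha _ Kb) (BinDihV (BinDih_dalpha _ Kb)).
pose i := (p^-1 x)%g.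
have p_i : p i = x by rewrite permKV.
have t_i : t i = (p^-1 y)%g.
  by rewrite -[t i](permK p) -(permM t p) tp_ps permM p_i tpermL.
have := congr1 ph (fk_kf i); rewrite /fa /fb qmulA !parity_homM3 ?parity_homV //;
  try solve [exact: Kk | exact: BinDih_dalpha | apply: BinDihV; exact: BinDih_dalpha].
rewrite p_i t_i /s tpermL.
by case: (ph (k i)); case: (ph (k (p^-1 y)%g)); case: (ph (dalpha a x)); case: (ph (dalpha a y));
  case: (ph (dalpha b i)); case: (ph (dalpha b (p^-1 y)%g)).
Qed.

Lemma conjugate_P_set_parity n lam a b : (0 < n)%N -> sumn lam = n -> ~~ has odd lam ->
  K a -> K b -> conjugate_in (G_n K H) (P_set n lam a) (P_set n lam b) ->
  forall ph, parity_hom K ph -> ph a = ph b.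
Proof.
move=> n_gt0 sum_lam even_lam Ka Kb [g [h [Gg [Gh [_ [hg1 [conj_ab _]]]]]]] ph hom.
have [p [k [[Kk bal_k] Eg]]] := G_n_mono Gg.
have [p' [k' [[Kk' _] Eh]]] := G_n_mono Gh.
subst g h; have := big_addb_block_even sum_lam even_lam
  (G := fun j => ph (k (p^-1 j)%g) (+) ph (dalpha a j) (+) ph (dalpha b (p^-1 j)%g))
  (conjugate_block_parity Ka Kb Kk Kk' hom hg1 conj_ab).
rewrite !big_split /= big_addb_dalpha ?parity_hom1 //.
rewrite -(big_addb_perm (p^-1)%g (fun i => ph (k i))) bal_k //.
rewrite -(big_addb_perm (p^-1)%g (fun i => ph (dalpha b i))) big_addb_dalpha ?parity_hom1 //.
by case: (ph a); case: (ph b).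
Qed.

Lemma conjugate_P_set_diag n lam a b (S : {set 'I_n}) z : (0 < n)%N ->
  K a -> K b -> K z -> (forall s i, young_perm lam s -> (s i \in S) = (i \in S)) ->
  (forall ph, parity_hom K ph -> ph a (+) ph b = ph z && odd #|S|) ->
  conjugate_in (G_n K H) (P_set n lam a) (P_set n lam b).
Proof.
move=> n_gt0 Ka Kb Kz S_young par.
pose w i := if i \in S then z else one.
have Kw i : K (w i) by rewrite /w; case: ifP => // _; exact: BinDih1.
have sum_w ph : parity_hom K ph -> \big[addb/false]_i ph (w i) = ph a (+) ph b.
  move=> hom; rewrite par // -big_addb_const [RHS]big_mkcond; apply: eq_bigr => i _.
  by rewrite /w; case: (i \in S); rewrite ?(parity_hom1 hom).
have da_unit c i : K c -> qnorm2 (dalpha c i) != 0%R.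
  by move=> Kc; apply/BinDih_unit/BinDih_dalpha.
have w_unit i := BinDih_unit (Kw i).
pose k i := qmul (qmul (dalpha b i) (w i)) (qinv (dalpha a i)).
pose k' i := qmul (qmul (dalpha a i) (qinv (w i))) (qinv (dalpha b i)).
have G_k : G_n K H (qdiag k).
  by apply/balanced_G_n/balanced_dalpha_conj => // ph hom; rewrite sum_w // addbC.
have G_k' : G_n K H (qdiag k').
  apply/balanced_G_n/balanced_dalpha_conj => // [i|ph hom]; first exact: BinDihV.
  by rewrite -sum_w //; apply: eq_bigr => i _; exact: parity_homV.
have conj_k s : young_perm lam s ->
    qmx_mul (qmx_mul (qdiag k) (qmx_mul (qmx_mul (D_alpha n a) (qperm_mx R s))
      (D_alpha n (qinv a)))) (qdiag k') =
    qmx_mul (qmx_mul (D_alpha n b) (qperm_mx R s)) (D_alpha n (qinv b)).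
  move=> young_s; rewrite !P_mx_mono qdiag_conj_mono; apply: eq_qmono => i.
  by rewrite /k /k' /w (S_young s) // !qmulA !qmulVK ?qmulK ?da_unit // -/(w i) w_unit.
exists (qdiag k), (qdiag k'); do 2!split=> //; split; [|split; [|split]].
- rewrite !qdiag_mono qmono_mul mulg1 qmx1_mono; apply: eq_qmono => i.
  by rewrite !perm1 /k /k' !qmulA qmulVK ?qmulK ?qmulqV ?da_unit.
- rewrite !qdiag_mono qmono_mul mulg1 qmx1_mono; apply: eq_qmono => i.
  by rewrite !perm1 /k /k' !qmulA !qmulVK ?qmulqV ?da_unit.
- by move=> _ [s [young_s ->]]; exists s; rewrite conj_k.
- move=> _ [s [young_s ->]].
  exists (qmx_mul (qmx_mul (D_alpha n a) (qperm_mx R s)) (D_alpha n (qinv a))).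
  by split; [exists s | rewrite conj_k].
Qed.

Lemma conjugate_P_setP n lam a b : (0 < n)%N -> sumn lam = n -> K a -> K b ->
  conjugate_in (G_n K H) (P_set n lam a) (P_set n lam b) <->
  H (qmul a (qinv b)) \/ has odd lam.
Proof.
move=> n_gt0 sum_lam Ka Kb; have Kab := BinDihM Ka (BinDihV Kb).
split=> [conj_ab|[Hab|odd_lam]].
- have [odd_lam|even_lam] := boolP (has odd lam); [by right | left].
  apply: parity_ker_comm_subgroup Kab _ => ph hom.
  by rewrite (parity_hom_qmulV hom) // (conjugate_P_set_parity _ _ even_lam _ _ conj_ab) ?addbb.
- apply: (conjugate_P_set_diag (S := set0) n_gt0 Ka Kb BinDih1) => [s i _|ph hom].
    by rewrite !inE.
  by rewrite cards0 andbF -(parity_hom_qmulV hom) // (comm_subgroup_parity hom).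
- have /(has_nthP 0)[c lt_c odd_c] := odd_lam.
  apply: (conjugate_P_set_diag (S := block n lam c) n_gt0 Ka Kb Kab) => [s i|ph hom].
    exact: young_perm_block.
  by rewrite card_block // odd_c andbT (parity_hom_qmulV hom).
Qed.

End BinaryDihedral.

Local Close Scope ring_scope.
Unset Implicit Arguments. Set Strict Implicit. Set Printing Implicit Defensive.

Theorem lemma4p9 (R : realType) (n d : nat) (zeta : quat R) (lam : seq nat)
    (alpha beta : quat R) :
  (3 <= n)%N -> (2 <= d)%N ->
  is_complex zeta -> has_order zeta (4 * d) ->
  is_partition n lam ->
  BinDih zeta alpha -> BinDih zeta beta ->
  (conjugate_in (G_n (BinDih zeta) (commutator_subgroup (BinDih zeta)))
                (P_set n lam alpha) (P_set n lam beta)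
   <-> commutator_subgroup (BinDih zeta) (qmul alpha (qinv beta))
       \/ odd (gcd_seq lam)).
Proof.
move=> le3n le2d zeta_complex zeta_order part_lam Kalpha Kbeta.
have d_gt0 : (0 < d)%N by apply: leq_trans le2d.
have n_gt0 : (0 < n)%N by apply: leq_trans le3n.
have sum_lam : sumn lam = n by case/and3P: part_lam => _ _ /eqP.
rewrite odd_gcd_seq.
exact: (conjugate_P_setP d_gt0 zeta_complex zeta_order n_gt0 sum_lam Kalpha Kbeta).
Qed.
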